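(* (Explicit Rayleigh's Monotonicity Law II.) Let $\Gamma$ be a metrized graph, let $e_i$ be an edge of $\Gamma$ with end points $p_i,q_i$ and length $L_i$, and let $\Gamma'$ be the metrized graph obtained from $\Gamma$ by replacing $e_i$ by an edge $e_i'$ with the same end points and length $L_i'>0$. For $s,t\in\Gamma-e_i$: if $e_i$ is not a bridge, $$r(s,t)=r_{\Gamma'}(s,t)+\frac{L_i-L_i'}{(L_i+R_i)(L_i'+R_i)}\big(j^{\Gamma-e_i}_{p_i}(q_i,s)-j^{\Gamma-e_i}_{p_i}(q_i,t)\big)^2 .$$ If $e_i$ is a bridge, then $r(s,t)=r_{\Gamma'}(s,t)$ when $s,t$ lie in the same connected component of $\Gamma-e_i$, and $r(s,t)=r_{\Gamma'}(s,t)+L_i-L_i'$ otherwise. In particular, if $e_i$ is not a bridge and $L_i>L_i'$, then $r(s,t)\ge r_{\Gamma'}(s,t)$ with equality iff $j^{\Gamma-e_i}_{p_i}(q_i,s)=j^{\Gamma-e_i}_{p_i}(q_i,t)$; if $e_i$ is a bridge and $L_i>L_i'$, then $r(s,t)\ge r_{\Gamma'}(s,t)$ with equality iff $s$ and $t$ are in the same connected component of $\Gamma-e_i$.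
   Context: A metrized graph $\Gamma$ is a finite connected graph (multiple edges and self-loops allowed) in which each edge is identified with a closed line segment of positive length. $\Gamma$ is regarded as a resistive electric circuit in which each edge is a resistor whose resistance equals its length. $r(x,y)$ is the effective resistance; $j_z(x,y)$ is the voltage at $x$ when a unit current enters at $y$ and exits at $z$, with reference voltage $0$ at $z$. $\Gamma-e_i$ is obtained by deleting the interior of $e_i$; $e_i$ is a bridge if $\Gamma-e_i$ is disconnected; for non-bridge $e_i$, $R_i:=r_{\Gamma-e_i}(p_i,q_i)$, and $j^{\Gamma-e_i}$ is the voltage function on $\Gamma-e_i$. *)

(* A metrized graph is given by a finite model:
   vertices V, edges E (multi-edges and self-loops allowed), end points
   p e, q e, and positive lengths L e (= resistances). *)
From mathcomp Require Import all_boot all_order all_algebra.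
From Stdlib Require Import ClassicalEpsilon.
Set Implicit Arguments. Unset Strict Implicit. Unset Printing Implicit Defensive.
Import Order.TTheory GRing.Theory Num.Theory.
Local Open Scope ring_scope.

Section Network.
Variables (R : realFieldType) (V E : finType) (p q : E -> V).

Definition adj (A : {set E}) : rel V := fun x y =>
  [exists e in A, ((p e == x) && (q e == y)) || ((p e == y) && (q e == x))].

Definition connected_net (A : {set E}) : Prop := forall x y : V, connect (adj A) x y.

Definition netout (A : {set E}) (L : E -> R) (f : V -> R) (v : V) : R :=
  \sum_(e in A) ((if p e == v then (f v - f (q e)) / L e else 0)
               + (if q e == v then (f v - f (p e)) / L e else 0)).

(* f is the voltage when a unit current enters at y and exits at z,
   with reference voltage 0 at z *)
Definition is_voltage (A : {set E}) (L : E -> R) (z y : V) (f : V -> R) : Prop :=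
  f z = 0 /\ forall v, netout A L f v = (v == y)%:R - (v == z)%:R.

(* the voltage function (unique when the network is connected) *)
Definition voltage (A : {set E}) (L : E -> R) (z y : V) : V -> R :=
  epsilon (inhabits (fun _ => 0)) (is_voltage A L z y).

(* j_z(x,y) : voltage at x, unit current entering at y, exiting at z *)
Definition jfun (A : {set E}) (L : E -> R) (z x y : V) : R := voltage A L z y x.

Definition resist (A : {set E}) (L : E -> R) (x y : V) : R := jfun A L y x x.

End Network.

From mathcomp Require Import all_boot all_order all_algebra.
From Stdlib Require Import ClassicalEpsilon.
From mathcomp Require Import ring lra.
Set Implicit Arguments. Unset Strict Implicit. Unset Printing Implicit Defensive.
Import Order.TTheory GRing.Theory Num.Theory.
Local Open Scope ring_scope.

(* Voltages exist and are unique because, on a connected network, the energy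
   sum_e (f(p e) - f(q e))^2 / L e vanishes only for constant f, so the grounded
   Kirchhoff operator is an injective, hence invertible, linear map.
   Changing the length of [ei] to [M ei] is handled by compensation.  If [ei] is
   not a bridge, take the voltage of [Γ - ei] and add the multiple of
   h = j^{Γ-ei}_{p}(q, .) (a unit current from [q ei] to [p ei] in [Γ - ei]) that
   makes the current [I] it carries through [ei] satisfy Ohm's law for [M ei];
   reciprocity identifies the voltage drop across [ei] and gives
   r_M(s,t) = r_{Γ-ei}(s,t) - (h s - h t)^2 / (M ei + R_i), and subtracting the
   formulas for [L ei] and [Li'] yields the theorem.  If [ei] is a bridge, the
   current through it is ±1 or 0 according as it separates [s] from [t], and adding
   to the old voltage the corresponding multiple of the indicator of the side of
   [p ei] gives r_M(s,t) = r(s,t) + (M ei - L ei) [s, t separated]. *)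

Lemma linear_fun_inj_surj (F : fieldType) (T : finType) (Phi : (T -> F) -> T -> F) :
    (forall f v, Phi f v = \sum_w f w * Phi (fun x => (x == w)%:R) v) ->
    (forall f, (forall v, Phi f v = 0) -> forall w, f w = 0) ->
  forall b, exists f, forall v, Phi f v = b v.
Proof.
move=> PhiE Phi_inj b.
pose M : 'M[F]_#|T| := \matrix_(i, j) Phi (fun x => (x == enum_val i)%:R) (enum_val j).
have mulM (u : 'rV_#|T|) v : (u *m M) 0 (enum_rank v) = Phi (fun w => u 0 (enum_rank w)) v.
  rewrite PhiE mxE [RHS](reindex (@enum_val T T)) /=; last exact: onW_bij _ (enum_val_bij T).
  by apply: eq_bigr => i _; rewrite mxE enum_rankK enum_valK.
have /inj_row_free : forall u : 'rV_#|T|, u *m M = 0 -> u = 0.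
  move=> u uM0; apply/rowP => i; rewrite mxE -[i]enum_valK.
  by apply: (Phi_inj (fun w => u 0 (enum_rank w))) => v; rewrite -mulM uM0 mxE.
rewrite row_free_unit => Munit.
exists (fun w => ((\row_i b (enum_val i)) *m invmx M) 0 (enum_rank w)) => v.
by rewrite -mulM mulmxKV // mxE enum_rankK.
Qed.

Section Connectivity.
Variables (V E : finType) (p q : E -> V).
Implicit Types (A : {set E}) (e : E) (x y : V).

Lemma adj_sym A : symmetric (adj p q A).
Proof. by move=> x y; apply: eq_existsb => e; rewrite orbC. Qed.

Lemma connect_adjC A x y : connect (adj p q A) x y = connect (adj p q A) y x.
Proof. exact/sym_connect_sym/adj_sym. Qed.

Lemma adj_edge A e : e \in A -> adj p q A (p e) (q e).
Proof. by move=> eA; apply/existsP; exists e; rewrite eA !eqxx. Qed.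

Lemma connect_edge A x e :
  e \in A -> connect (adj p q A) x (p e) = connect (adj p q A) x (q e).
Proof.
move=> /adj_edge pq; have qp : adj p q A (q e) (p e) by rewrite adj_sym.
by apply/idP/idP => /connect_trans; apply; apply: connect1.
Qed.

Lemma edge_const_connect (T : eqType) A (f : V -> T) x y :
  {in A, forall e, f (p e) = f (q e)} -> connect (adj p q A) x y -> f x = f y.
Proof.
move=> fA; have fcl : closed (adj p q A) [pred w | f w == f x].
  move=> u w /existsP[e /andP[eA /orP[]/andP[/eqP<- /eqP<-]]];
  by rewrite !inE fA.
by move=> /(closed_connect fcl); rewrite !inE eqxx => /esym/eqP.
Qed.

Section DeleteEdge.
Variables (ei : E) (conn : connected_net p q [set: E]).
Let A' := [set: E] :\ ei.

Lemma connect_setD1_ends x :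
  connect (adj p q A') (p ei) x || connect (adj p q A') (q ei) x.
Proof.
pose near := [pred w | connect (adj p q A') (p ei) w || connect (adj p q A') (q ei) w].
suff ncl : closed (adj p q [set: E]) near.
  by have := closed_connect ncl (conn (p ei) x); rewrite !inE connect0 => <-.
move=> x1 x2 /existsP[e /andP[_]]; rewrite !inE; have [->|neq] := eqVneq e ei => He.
  by case/orP: He => /andP[/eqP<- /eqP<-]; rewrite !connect0 ?orbT.
have eA : e \in A' by rewrite !inE neq.
have same w : connect (adj p q A') w x1 = connect (adj p q A') w x2.
  by case/orP: He => /andP[/eqP<- /eqP<-]; rewrite connect_edge.
by rewrite !same.
Qed.

Lemma bridge_ends_disconnected :
  ~ connected_net p q A' -> ~~ connect (adj p q A') (p ei) (q ei).
Proof.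
move=> nconn; apply/negP => pq; apply: nconn => x y.
have from_p w : connect (adj p q A') (p ei) w.
  by case/orP: (connect_setD1_ends w) => // /(connect_trans pq).
by apply: connect_trans (from_p y); rewrite connect_adjC.
Qed.

Lemma connect_setD1_side s t :
  (connect (adj p q A') (p ei) s == connect (adj p q A') (p ei) t)
  = connect (adj p q A') s t.
Proof.
apply/eqP/idP => [same|st]; last first.
  by apply/idP/idP => /connect_trans; apply; rewrite // connect_adjC.
have ends := connect_setD1_ends; case ps : (connect _ (p ei) s) in same.
  by apply: connect_trans (esym same : connect _ _ t); rewrite connect_adjC.
have := ends s; have := ends t; rewrite -same ps /= => qt qs.
by apply: connect_trans qt; rewrite connect_adjC.
Qed.

End DeleteEdge.
End Connectivity.

Section Network.
Variables (R : realFieldType) (V E : finType) (p q : E -> V).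
Implicit Types (A : {set E}) (L M : E -> R) (f g : V -> R) (x y z v : V).

Lemma eq_netout A L M f g v :
  {in A, L =1 M} -> f =1 g -> netout p q A L f v = netout p q A M g v.
Proof. by move=> LM fg; apply: eq_bigr => e eA; rewrite !fg LM. Qed.

Lemma netoutD A L f g v :
  netout p q A L (fun x => f x + g x) v = netout p q A L f v + netout p q A L g v.
Proof.
rewrite /netout -big_split /=; apply: eq_bigr => e _.
by case: (p e == v); case: (q e == v); rewrite ?addr0 //; ring.
Qed.

Lemma netoutB A L f g v :
  netout p q A L (fun x => f x - g x) v = netout p q A L f v - netout p q A L g v.
Proof.
rewrite /netout -sumrB; apply: eq_bigr => e _.
by case: (p e == v); case: (q e == v); rewrite ?subr0 ?addr0 //; ring.
Qed.

Lemma netoutZ A L c f v :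
  netout p q A L (fun x => c * f x) v = c * netout p q A L f v.
Proof.
rewrite /netout mulr_sumr; apply: eq_bigr => e _.
by case: (p e == v); case: (q e == v); ring.
Qed.

Lemma netout_sum (I : finType) A L (F : I -> V -> R) v :
  netout p q A L (fun x => \sum_i F i x) v = \sum_i netout p q A L (F i) v.
Proof.
rewrite /netout exchange_big; apply: eq_bigr => e _.
have sumB (b : bool) x y : (if b then (\sum_i F i x - \sum_i F i y) / L e else 0)
    = \sum_i (if b then (F i x - F i y) / L e else 0).
  by case: b; [rewrite -sumrB mulr_suml | rewrite big1].
by rewrite !sumB -big_split.
Qed.

Lemma netout_eq0 A L f v :
  {in A, forall e, f (p e) = f (q e)} -> netout p q A L f v = 0.
Proof.
move=> fA; rewrite /netout big1 // => e eA.
by case: eqP => [<-|_]; case: eqP => [<-|_]; rewrite ?fA // ?subrr ?mul0r ?addr0.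
Qed.

Lemma netout_edge_term L f e v :
  (if p e == v then (f v - f (q e)) / L e else 0)
    + (if q e == v then (f v - f (p e)) / L e else 0)
  = ((v == p e)%:R - (v == q e)%:R) * ((f (p e) - f (q e)) / L e).
Proof.
rewrite (eq_sym v) (eq_sym v).
by case: eqP => [<-|_]; case: eqP => [qv|_]; rewrite ?qv /=; ring.
Qed.

Lemma netout_setD1 A L f e v : e \in A ->
  netout p q A L f v = ((v == p e)%:R - (v == q e)%:R) * ((f (p e) - f (q e)) / L e)
                       + netout p q (A :\ e) L f v.
Proof. by move=> eA; rewrite /netout (big_setD1 e eA) netout_edge_term. Qed.

Lemma sum_mul_indicator (F : V -> R) y : \sum_v F v * (v == y)%:R = F y.
Proof.
by rewrite (bigD1 y) //= eqxx mulr1 big1 ?addr0 // => v /negbTE->; rewrite mulr0.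
Qed.

Lemma sum_mul_dipole (F : V -> R) y z :
  \sum_v F v * ((v == y)%:R - (v == z)%:R) = F y - F z.
Proof. by under eq_bigr do rewrite mulrBr; rewrite sumrB !sum_mul_indicator. Qed.

Lemma sum_dipole y z : \sum_v ((v == y)%:R - (v == z)%:R : R) = 0.
Proof. by have := sum_mul_dipole (fun _ => 1) y z; under eq_bigr do rewrite mul1r; rewrite subrr. Qed.

Lemma sum_mul_netout A L f g :
  \sum_v f v * netout p q A L g v =
  \sum_(e in A) (f (p e) - f (q e)) * (g (p e) - g (q e)) / L e.
Proof.
under eq_bigr do rewrite mulr_sumr.
rewrite exchange_big; apply: eq_bigr => e _.
under eq_bigr do rewrite netout_edge_term mulrA.
by rewrite -mulr_suml sum_mul_dipole mulrA.
Qed.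

Lemma sum_netout A L g : \sum_v netout p q A L g v = 0.
Proof.
under eq_bigr do rewrite -[netout _ _ _ _ _ _]mul1r.
by rewrite sum_mul_netout big1 // => e _; rewrite subrr !mul0r.
Qed.

Lemma netout_off_sink A L f z (d : V -> R) :
    (forall v, v != z -> netout p q A L f v = d v) -> \sum_v d v = 0 ->
  forall v, netout p q A L f v = d v.
Proof.
move=> fd; rewrite (bigD1 z) //= => d0 v; have [->|/fd //] := eqVneq v z.
have := sum_netout A L f; rewrite (bigD1 z) //= (eq_bigr _ fd) -[RHS]d0.
exact: addIr.
Qed.

Lemma voltage_energy A L z y f g : is_voltage p q A L z y f ->
  \sum_(e in A) (g (p e) - g (q e)) * (f (p e) - f (q e)) / L e = g y - g z.
Proof.
by case=> _ fnet; rewrite -sum_mul_netout -sum_mul_dipole; apply: eq_bigr => v _; rewrite fnet.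
Qed.

Lemma voltage_reciprocity A L z1 y1 z2 y2 f g :
    is_voltage p q A L z1 y1 f -> is_voltage p q A L z2 y2 g ->
  f y2 - f z2 = g y1 - g z1.
Proof.
move=> /voltage_energy <- /voltage_energy <-; apply: eq_bigr => e _; ring.
Qed.

Section PositiveLengths.
Variables (A : {set E}) (L : E -> R).
Hypothesis L_gt0 : forall e, 0 < L e.

Lemma edge_energy_ge0 f e : 0 <= (f (p e) - f (q e)) * (f (p e) - f (q e)) / L e.
Proof. by rewrite -expr2 divr_ge0 ?sqr_ge0 ?ltW. Qed.

Lemma voltage_ge0 z y f : is_voltage p q A L z y f -> 0 <= f y.
Proof.
move=> fV; have [fz _] := fV; have := voltage_energy f fV; rewrite fz subr0 => <-.
by apply: sumr_ge0 => e _; apply: edge_energy_ge0.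
Qed.

Lemma harmonic_edge_const f :
  (forall v, netout p q A L f v = 0) -> {in A, forall e, f (p e) = f (q e)}.
Proof.
move=> harm e eA; apply/eqP; rewrite -subr_eq0.
have energy0 : \sum_(e' in A) (f (p e') - f (q e')) * (f (p e') - f (q e')) / L e' = 0.
  by rewrite -sum_mul_netout big1 // => v _; rewrite harm mulr0.
have /eqP := psumr_eq0P (fun e' _ => edge_energy_ge0 f e') energy0 eA.
by rewrite mulf_eq0 invr_eq0 (gt_eqF (L_gt0 e)) orbF mulf_eq0 orbb.
Qed.

Hypothesis A_conn : connected_net p q A.

Lemma harmonic_const f : (forall v, netout p q A L f v = 0) -> forall x y, f x = f y.
Proof. by move=> /harmonic_edge_const fA x y; apply: edge_const_connect fA _. Qed.

Lemma voltage_unique z y f g :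
  is_voltage p q A L z y f -> is_voltage p q A L z y g -> f =1 g.
Proof.
move=> [fz fnet] [gz gnet] x; apply/eqP; rewrite -subr_eq0.
have harm v : netout p q A L (fun x => f x - g x) v = 0.
  by rewrite netoutB fnet gnet subrr.
by rewrite (harmonic_const harm x z) fz gz subrr.
Qed.

Definition grounded z f v := if v == z then f z else netout p q A L f v.

Lemma groundedE z f v :
  grounded z f v = \sum_w f w * grounded z (fun x => (x == w)%:R) v.
Proof.
have deltaE x : \sum_w f w * (x == w)%:R = f x.
  by under eq_bigr do rewrite eq_sym; rewrite sum_mul_indicator.
rewrite /grounded; case: (v == z); first by rewrite deltaE.
by under eq_bigr do rewrite -netoutZ; rewrite -netout_sum; apply: eq_netout.
Qed.

Lemma grounded_inj z f : (forall v, grounded z f v = 0) -> forall w, f w = 0.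
Proof.
move=> f0; have fz : f z = 0 by have := f0 z; rewrite /grounded eqxx.
have off_z v : v != z -> netout p q A L f v = 0.
  by move=> /negbTE vz; have := f0 v; rewrite /grounded vz.
have harm : forall v, netout p q A L f v = 0.
  by apply: (netout_off_sink off_z); rewrite big1.
by move=> w; rewrite (harmonic_const harm w z).
Qed.

Lemma voltage_exists z y : exists f, is_voltage p q A L z y f.
Proof.
have [f fground] := linear_fun_inj_surj (groundedE z) (@grounded_inj z)
  (fun v => if v == z then 0 else (v == y)%:R - (v == z)%:R).
exists f; split; first by have := fground z; rewrite /grounded eqxx.
have off_z v : v != z -> netout p q A L f v = (v == y)%:R - (v == z)%:R.
  by move=> /negbTE vz; have := fground v; rewrite /grounded vz.
exact: netout_off_sink off_z (sum_dipole y z).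
Qed.

Lemma is_voltage_voltage z y : is_voltage p q A L z y (voltage p q A L z y).
Proof. exact: epsilon_spec (voltage_exists z y). Qed.

Lemma voltage_eq z y f : is_voltage p q A L z y f -> voltage p q A L z y =1 f.
Proof. exact: voltage_unique (is_voltage_voltage z y). Qed.

Lemma jfunC z x y : jfun p q A L z x y = jfun p q A L z y x.
Proof.
have [yz _] := is_voltage_voltage z y; have [xz _] := is_voltage_voltage z x.
have := voltage_reciprocity (is_voltage_voltage z y) (is_voltage_voltage z x).
by rewrite yz xz !subr0.
Qed.

Lemma resistC x y : resist p q A L x y = resist p q A L y x.
Proof.
have [xx _] := is_voltage_voltage x y; have [yy _] := is_voltage_voltage y x.
have := voltage_reciprocity (is_voltage_voltage y x) (is_voltage_voltage x y).
by rewrite xx yy !sub0r => /oppr_inj.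
Qed.

Lemma resist_ge0 x y : 0 <= resist p q A L x y.
Proof. exact: voltage_ge0 (is_voltage_voltage y x). Qed.

End PositiveLengths.

Section ChangeEdgeLength.
Variables (L M : E -> R) (ei : E).
Hypotheses (L_gt0 : forall e, 0 < L e) (conn : connected_net p q [set: E]).
Hypotheses (ML : forall e, e != ei -> M e = L e) (Mei_gt0 : 0 < M ei).
Let A' := [set: E] :\ ei.

Let M_gt0 e : 0 < M e.
Proof. by have [->|/ML->] := eqVneq e ei. Qed.

Let netout_change f v : netout p q [set: E] M f v =
  ((v == p ei)%:R - (v == q ei)%:R) * ((f (p ei) - f (q ei)) / M ei) + netout p q A' L f v.
Proof.
rewrite (netout_setD1 _ _ _ (in_setT ei)); congr (_ + _).
by apply: eq_netout => // e; rewrite !inE andbT => /ML.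
Qed.

Lemma resist_change_nonbridge s t : connected_net p q A' ->
  resist p q [set: E] M s t =
  resist p q A' L s t - (jfun p q A' L (p ei) (q ei) s - jfun p q A' L (p ei) (q ei) t) ^+ 2
                        / (M ei + resist p q A' L (p ei) (q ei)).
Proof.
move=> conn'; set j := jfun p q A' L (p ei) (q ei).
set g := voltage p q A' L t s; set h := voltage p q A' L (p ei) (q ei).
have gV : is_voltage p q A' L t s g := is_voltage_voltage L_gt0 conn' t s.
have hV : is_voltage p q A' L (p ei) (q ei) h := is_voltage_voltage L_gt0 conn' _ _.
have jE x : j x = h x by rewrite /j jfunC.
have RiE : resist p q A' L (p ei) (q ei) = h (q ei) by rewrite resistC.
have MRi_neq0 : M ei + h (q ei) != 0.
  by rewrite gt_eqF // ltr_pwDl // (voltage_ge0 L_gt0 hV).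
have gq := voltage_reciprocity gV hV; have [gt gnet] := gV; have [hp hnet] := hV.
pose I := - (h s - h t) / (M ei + h (q ei)).
pose f x := g x + I * (h x - h t).
have fV : is_voltage p q [set: E] M t s f.
  split=> [|v]; first by rewrite /f gt subrr mulr0 addr0.
  have drop : f (p ei) - f (q ei) = I * M ei.
    by rewrite /f hp; move: gq; rewrite /I -/g => /eqP; rewrite subr_eq => /eqP->; field.
  rewrite netout_change drop mulfK ?gt_eqF // netoutD netoutZ netoutB gnet hnet.
  by rewrite (@netout_eq0 _ L (fun _ => h t)) //; ring.
by rewrite !jE RiE /resist /jfun (voltage_eq M_gt0 conn fV) /f -/g /I; field.
Qed.

Lemma resist_change_bridge s t : ~ connected_net p q A' ->
  resist p q [set: E] M s t =
  resist p q [set: E] L s t + (M ei - L ei) * (~~ connect (adj p q A') s t)%:R.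
Proof.
move=> nconn'.
set f := voltage p q [set: E] L t s.
have fV : is_voltage p q [set: E] L t s f := is_voltage_voltage L_gt0 conn t s.
pose side v : R := (connect (adj p q A') (p ei) v)%:R.
have side_edge : {in A', forall e, side (p e) = side (q e)}.
  by move=> e eA; rewrite /side connect_edge.
have side_p : side (p ei) = 1 by rewrite /side connect0.
have side_q : side (q ei) = 0.
  by rewrite /side (negbTE (bridge_ends_disconnected conn nconn')).
set I := side s - side t.
have current : (f (p ei) - f (q ei)) / L ei = I.
  rewrite /I -(voltage_energy side fV) (big_setD1 ei) ?in_setT //= side_p side_q big1.
    by rewrite subr0 mul1r addr0.
  by move=> e eA; rewrite side_edge // subrr !mul0r.
have [ft fnet] := fV.
pose f' x := f x + (M ei - L ei) * I * (side x - side t).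
have f'V : is_voltage p q [set: E] M t s f'.
  split=> [|v]; first by rewrite /f' ft subrr mulr0 addr0.
  have drop : f' (p ei) - f' (q ei) = I * M ei.
    rewrite /f' side_p side_q -current; field.
    by rewrite gt_eqF.
  rewrite netout_change drop mulfK ?gt_eqF // netoutD netoutZ.
  rewrite (@netout_eq0 _ L (fun x => side x - side t)) => [|e eA]; last first.
    by rewrite side_edge.
  by rewrite -(fnet v) (netout_setD1 _ _ _ (in_setT ei)) current; ring.
have side_sq : I * I = (~~ connect (adj p q A') s t)%:R.
  rewrite /I /side -(connect_setD1_side ei conn s t).
  by do 2!case: (connect _ _ _); rewrite /= ?subrr ?mul0r ?subr0 ?sub0r ?mulrNN ?mulr1.
by rewrite /resist /jfun (voltage_eq M_gt0 conn f'V) /f' -/f -mulrA side_sq.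
Qed.
End ChangeEdgeLength.
End Network.

Lemma addr_pmulr_eq0 (F : realDomainType) (x y c w : F) :
  0 < c -> 0 <= w -> x = y + c * w -> y <= x /\ (x = y <-> w = 0).
Proof.
move=> c_gt0 w_ge0 ->; rewrite lerDl mulr_ge0 ?(ltW c_gt0) //; split=> //.
split=> [/eqP|->]; last by rewrite mulr0 addr0.
by rewrite -subr_eq0 addrAC subrr add0r mulf_eq0 (gt_eqF c_gt0) => /eqP.
Qed.

Theorem theorem3p10 (R : realFieldType) (V E : finType) (p q : E -> V)
    (L : E -> R) (ei : E) (Li' : R) (s t : V)
    (HL : forall e, 0 < L e) (Hconn : connected_net p q [set: E])
    (HLi' : 0 < Li') :
  let Li := L ei in
  let L' := fun e => if e == ei then Li' else L e in
  let A' := [set: E] :\ ei in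
  let r := resist p q [set: E] L in
  let r' := resist p q [set: E] L' in
  let Ri := resist p q A' L (p ei) (q ei) in
  let jr := jfun p q A' L (p ei) (q ei) in
  (connected_net p q A' ->
     r s t = r' s t + (Li - Li') / ((Li + Ri) * (Li' + Ri)) * (jr s - jr t) ^+ 2)
  /\ (~ connected_net p q A' ->
        (connect (adj p q A') s t -> r s t = r' s t)
     /\ (~ connect (adj p q A') s t -> r s t = r' s t + Li - Li'))
  /\ (connected_net p q A' -> Li' < Li ->
        r' s t <= r s t /\ (r s t = r' s t <-> jr s = jr t))
  /\ (~ connected_net p q A' -> Li' < Li ->
        r' s t <= r s t /\ (r s t = r' s t <-> connect (adj p q A') s t)).
Proof.
move=> Li L' A' r r' Ri jr.
have L'L e : e != ei -> L' e = L e by rewrite /L' => /negbTE->.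
have L'ei : L' ei = Li' by rewrite /L' eqxx.
have Li_gt0 : 0 < Li := HL ei.
have Ri_ge0 : connected_net p q A' -> 0 <= Ri by move=> conn'; apply: resist_ge0.
have nonbridge : connected_net p q A' ->
    r s t = r' s t + (Li - Li') / ((Li + Ri) * (Li' + Ri)) * (jr s - jr t) ^+ 2.
  move=> conn'; have Ri0 := Ri_ge0 conn'.
  have LiRi : Li + Ri != 0 by apply: lt0r_neq0; lra.
  have Li'Ri : Li' + Ri != 0 by apply: lt0r_neq0; lra.
  rewrite /r /r' (resist_change_nonbridge HL Hconn (fun _ _ => erefl) Li_gt0 s t conn').
  rewrite (resist_change_nonbridge HL Hconn L'L _ s t conn') ?L'ei // -/A' -/Ri -/jr -/Li.
  by field; rewrite LiRi Li'Ri.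
have bridge : ~ connected_net p q A' ->
    r s t = r' s t + (Li - Li') * (~~ connect (adj p q A') s t)%:R.
  by move=> nconn'; rewrite /r' (resist_change_bridge HL Hconn L'L _ s t nconn') ?L'ei // -/Li -/r -/A'; ring.
split; first exact: nonbridge.
split.
  by move=> nconn'; rewrite bridge //; split=> [->|/negP/negbTE->] /=; ring.
split=> [conn' Li'_lt_Li | nconn' Li'_lt_Li].
  have c_gt0 : 0 < (Li - Li') / ((Li + Ri) * (Li' + Ri)).
    by have Ri0 := Ri_ge0 conn'; rewrite divr_gt0 ?mulr_gt0 ?subr_gt0 //; lra.
  have [le eq] := addr_pmulr_eq0 c_gt0 (sqr_ge0 _) (nonbridge conn').
  split=> //; rewrite eq; split=> [/eqP|->]; last by rewrite subrr expr2 mulr0.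
  by rewrite sqrf_eq0 subr_eq0 => /eqP.
have c_gt0 : 0 < Li - Li' by rewrite subr_gt0.
have [le eq] := addr_pmulr_eq0 c_gt0 (ler0n _ _) (bridge nconn').
split=> //; rewrite eq; case: (connect _ s t) => //=.
by split=> // /eqP; rewrite oner_eq0.
Qed.
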